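(* Let $\mathcal{H} = \bigotimes_{i=1}^n \mathcal{H}_i$, $H \in \mathrm{Herm}(\mathcal{H})$, $\mathcal{A}$ an ancillary Hilbert space and $H' \in \mathrm{Herm}(\mathcal{H}\otimes\mathcal{A})$. If $(H',\mathcal{A})$ is an $(\eta,\epsilon)$-gadget for $H$, then $(H',\mathcal{A})$ satisfies the $(\zeta,\epsilon)$-gadget property for $H$ with $\zeta = O(\eta)$.
   Context: $\|\cdot\|$ denotes the operator norm, $\mathrm{Proj}(\cdot)$ the set of orthogonal projectors and $\mathrm{U}(\cdot)$ the unitary group. $(H',\mathcal{A})$ is an $(\eta,\epsilon)$-gadget for $H$ if there exist $P \in \mathrm{Proj}(\mathcal{A})\setminus\{0\}$ and $U \in \mathrm{U}(\mathcal{H}\otimes\mathcal{A})$ with $\|U - \mathbb{I}\| \le \eta$ and $\|P'H'P' - U(H\otimes P)U^\dagger\| \le \epsilon$, where $P' = U(\mathbb{I}\otimes P)U^\dagger$. $(H',\mathcal{A})$ satisfies the $(\zeta,\epsilon)$-gadget property for $H$ if there exist $P' \in \mathrm{Proj}(\mathcal{H}\otimes\mathcal{A})$ and $\tilde P \in \mathrm{Proj}(\mathcal{A})\setminus\{0\}$ such that for every $H_{\mathrm{else}} \in \mathrm{Herm}(\mathcal{H})$ there is a unitary $\tilde U_{H_{\mathrm{else}}} \in \mathrm{U}(\mathcal{H}\otimes\mathcal{A})$ with $\|P'(H' + H_{\mathrm{else}}\otimes\mathbb{I})P' - \tilde U_{H_{\mathrm{else}}}((H+H_{\mathrm{else}})\otimes\tilde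 P)\tilde U_{H_{\mathrm{else}}}^\dagger\| \le \epsilon + \zeta\|H_{\mathrm{else}}\|$. *)

From HB Require Import structures.
From mathcomp Require Import all_boot all_order all_algebra.
From mathcomp Require Import complex mxtens.
From mathcomp Require Import boolp classical_sets reals.
Set Implicit Arguments. Unset Strict Implicit. Unset Printing Implicit Defensive.
Import Order.TTheory GRing.Theory Num.Theory.
Local Open Scope ring_scope.
Local Open Scope complex_scope.

(* Finite-dimensional Hilbert spaces are C^d with C = R[i] (R : realType),
   operators are d x d complex matrices. *)

Section QDefs.
Variable R : realType.
Local Notation C := R[i].

Definition adjmx {m n} (A : 'M[C]_(m, n)) : 'M[C]_(n, m) := map_mx conjc A^T.

Definition vnorm {n} (v : 'cV[C]_n) : R :=
  Num.sqrt (\sum_(i < n) (Normc.normc (v i 0)) ^+ 2).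

Definition opnorm {m n} (A : 'M[C]_(m, n)) : R :=
  sup [set vnorm (A *m v) | v in [set v : 'cV[C]_n | vnorm v <= 1]]%classic.

Definition herm_op {n} (A : 'M[C]_n) : Prop := adjmx A = A.
Definition proj_op {n} (P : 'M[C]_n) : Prop := P *m P = P /\ adjmx P = P.
Definition unitary_op {n} (U : 'M[C]_n) : Prop := U *m adjmx U = 1%:M.

(* (eta, eps)-gadget: H acts on C^d, the ancilla is C^m, H' on C^d (x) C^m. *)
Definition is_gadget {d m} (H : 'M[C]_d) (H' : 'M[C]_(d * m)) (eta eps : R) :=
  exists (P : 'M[C]_m) (U : 'M[C]_(d * m)),
    [/\ proj_op P, P != 0, unitary_op U, opnorm (U - 1%:M) <= eta &
     let P' := U *m (1%:M *t P) *m adjmx U in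
     opnorm (P' *m H' *m P' - U *m (H *t P) *m adjmx U) <= eps].

Definition gadget_property {d m} (H : 'M[C]_d) (H' : 'M[C]_(d * m))
    (zeta eps : R) :=
  exists (P' : 'M[C]_(d * m)) (Pt : 'M[C]_m),
    [/\ proj_op P', proj_op Pt, Pt != 0 &
     forall Helse : 'M[C]_d, herm_op Helse ->
       exists Ut : 'M[C]_(d * m), unitary_op Ut /\
         opnorm (P' *m (H' + Helse *t 1%:M) *m P'
                 - Ut *m ((H + Helse) *t Pt) *m adjmx Ut)
         <= eps + zeta * opnorm Helse].
End QDefs.

From HB Require Import structures.
From mathcomp Require Import all_boot all_order all_algebra.
From mathcomp Require Import complex mxtens.
From mathcomp Require Import boolp classical_sets reals.
From mathcomp Require Import lra.
Import Order.TTheory GRing.Theory Num.Theory.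
Local Open Scope ring_scope.

(* Keep the projector P' := U (1 ⊗ P) U^† and the unitary U of the gadget for
   every Helse. With X := Helse ⊗ 1 and Q := 1 ⊗ P, adding Helse changes the
   error by P' X P' - U (Q X Q) U^†, and since U is unitary this equals
   P' [X, U - 1] U^† P'. Projectors and unitaries have norm at most 1 and
   ‖X‖ ≤ ‖Helse‖, so the additional error is at most 2 ‖U - 1‖ ‖Helse‖, i.e.
   ζ = 2η works. *)

Lemma sum_mul_le_sqrt (R : rcfType) (I : finType) (a b : I -> R) :
  \sum_i a i * b i <= Num.sqrt (\sum_i a i ^+ 2) * Num.sqrt (\sum_i b i ^+ 2).
Proof.
have amgm i j :
    2 * (a i * b i * (a j * b j)) <= a i ^+ 2 * b j ^+ 2 + a j ^+ 2 * b i ^+ 2.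
  by have := sqr_ge0 (a i * b j - a j * b i); nra.
have sqr_le : (\sum_i a i * b i) ^+ 2 <= (\sum_i a i ^+ 2) * (\sum_i b i ^+ 2).
  rewrite -(ler_pM2l (ltr0Sn _ 1)) expr2 !mulr_suml.
  under eq_bigr do rewrite mulr_sumr.
  under [in leRHS]eq_bigr do rewrite mulr_sumr.
  rewrite [in leRHS]mulr_natl mulr2n [X in _ <= _ + X]exchange_big.
  rewrite -big_split mulr_sumr /=.
  apply: ler_sum => i _; rewrite -big_split mulr_sumr /=; apply: ler_sum => j _.
  exact: amgm.
apply: le_trans (ler_norm _) _.
rewrite -sqrtr_sqr -sqrtrM ?sumr_ge0 // => [|i _]; last exact: sqr_ge0.
by rewrite ler_sqrt // mulr_ge0 ?sumr_ge0 // => i _; exact: sqr_ge0.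
Qed.

Lemma sum_mxtens_index (V : nmodType) {p m} (F : 'I_(p * m) -> V) :
  \sum_k F k = \sum_(i < p) \sum_(j < m) F (mxtens_index (i, j)).
Proof.
rewrite pair_big (reindex (@mxtens_index p m)) /=; first by apply: eq_bigr => -[].
by exists (@mxtens_unindex p m) => x _; rewrite (mxtens_indexK, mxtens_unindexK).
Qed.

Section Norms.
Context {R : realType}.
Local Notation C := R[i].
Local Notation normc := (@Normc.normc R).

Lemma normc_ge0 (z : C) : 0 <= normc z.
Proof. by case: z => a b; exact: sqrtr_ge0. Qed.

Lemma sqr_normc (z : C) : ((normc z) ^+ 2)%:C%C = conjc z * z.
Proof.
case: z => a b /=; rewrite sqr_sqrtr ?addr_ge0 ?sqr_ge0 //.
by apply/eqP; rewrite eq_complex /= mulNr opprK mulNr [b * a]mulrC subrr !expr2 !eqxx.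
Qed.

Lemma normc_real (c : R) : 0 <= c -> normc c%:C%C = c.
Proof. by move=> c0 /=; rewrite expr0n addr0 sqrtr_sqr ger0_norm. Qed.

Section VectorNorm.
Context {n : nat}.
Implicit Types u v w : 'cV[C]_n.

Definition vnorm2 v : R := \sum_(i < n) normc (v i 0) ^+ 2.

Lemma vnormE v : vnorm v = Num.sqrt (vnorm2 v).
Proof. by []. Qed.

Lemma vnorm2_ge0 v : 0 <= vnorm2 v.
Proof. by apply: sumr_ge0 => i _; exact: sqr_ge0. Qed.

Lemma vnorm_ge0 v : 0 <= vnorm v.
Proof. exact: sqrtr_ge0. Qed.

Lemma sqr_vnorm v : vnorm v ^+ 2 = vnorm2 v.
Proof. by rewrite sqr_sqrtr // vnorm2_ge0. Qed.

Lemma vnorm2_adjmx v : (vnorm2 v)%:C%C = (adjmx v *m v) 0 0.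
Proof.
rewrite rmorph_sum !mxE; apply: eq_bigr => i _.
by rewrite /adjmx !mxE; exact: sqr_normc.
Qed.

Lemma vnorm0 : vnorm (0 : 'cV[C]_n) = 0.
Proof.
by rewrite vnormE /vnorm2 big1 ?sqrtr0 // => i _; rewrite mxE Normc.normc0 expr0n.
Qed.

Lemma vnorm_eq0 v : vnorm v = 0 -> v = 0.
Proof.
move/eqP; rewrite sqrtr_eq0 => v_le0.
have /psumr_eq0P v0 : vnorm2 v = 0 by apply/eqP; rewrite eq_le v_le0 vnorm2_ge0.
apply/matrixP => i j; rewrite ord1 mxE; apply: Normc.eq0_normc.
by apply/eqP; rewrite -sqrf_eq0 v0 // => k _; exact: sqr_ge0.
Qed.

Lemma vnormZ (c : C) v : vnorm (c *: v) = normc c * vnorm v.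
Proof.
rewrite !vnormE /vnorm2 -[normc c]ger0_norm ?normc_ge0 // -sqrtr_sqr -sqrtrM ?sqr_ge0 //.
rewrite mulr_sumr; congr Num.sqrt; apply: eq_bigr => i _.
by rewrite mxE Normc.normcM exprMn.
Qed.

Lemma vnormN v : vnorm (- v) = vnorm v.
Proof. by rewrite -scaleN1r vnormZ normcN Normc.normc1 mul1r. Qed.

Lemma vnormD u w : vnorm (u + w) <= vnorm u + vnorm w.
Proof.
rewrite -[leRHS]ger0_norm ?addr_ge0 ?vnorm_ge0 // -sqrtr_sqr vnormE ler_sqrt ?sqr_ge0 //.
have cs : \sum_i normc (u i 0) * normc (w i 0) <= vnorm u * vnorm w.
  exact: sum_mul_le_sqrt.
apply: le_trans (_ : \sum_i (normc (u i 0) + normc (w i 0)) ^+ 2 <= _).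
  apply: ler_sum => i _; rewrite mxE lerXn2r ?nnegrE ?addr_ge0 ?normc_ge0 //.
  exact: le_normcD.
under eq_bigr do rewrite sqrrD.
rewrite sqrrD !sqr_vnorm !big_split /= -/(vnorm2 u) -/(vnorm2 w) mulr2n.
by rewrite lerD2r lerD2l lerD.
Qed.

Lemma vnormB u w : vnorm (u - w) <= vnorm u + vnorm w.
Proof. by rewrite -(vnormN w) vnormD. Qed.

Lemma normc_le_vnorm v i : normc (v i 0) <= vnorm v.
Proof.
rewrite -[leLHS]ger0_norm ?normc_ge0 // -sqrtr_sqr vnormE ler_sqrt ?vnorm2_ge0 //.
by rewrite /vnorm2 (bigD1 i) //= lerDl sumr_ge0 // => j _; exact: sqr_ge0.
Qed.

Lemma vnorm_sum {I : Type} (r : seq I) (F : I -> 'cV[C]_n) :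
  vnorm (\sum_(j <- r) F j) <= \sum_(j <- r) vnorm (F j).
Proof.
elim: r => [|x r IHr]; first by rewrite !big_nil vnorm0.
by rewrite !big_cons (le_trans (vnormD _ _)) // lerD2l.
Qed.

End VectorNorm.

Section OperatorNorm.
Context {m n : nat}.
Implicit Types A B : 'M[C]_(m, n).

Lemma vnorm_mulmx_bounded A :
  exists2 K, 0 <= K & forall v, vnorm (A *m v) <= K * vnorm v.
Proof.
exists (\sum_j vnorm (col j A)) => [|v].
  by rewrite sumr_ge0 // => j _; exact: vnorm_ge0.
have -> : A *m v = \sum_j v j 0 *: col j A.
  apply/matrixP => i k; rewrite ord1 !mxE summxE; apply: eq_bigr => j _.
  by rewrite !mxE mulrC.
apply: le_trans (vnorm_sum _ _) _.
rewrite mulr_suml; apply: ler_sum => j _; rewrite vnormZ mulrC.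
by rewrite ler_wpM2l ?vnorm_ge0 ?normc_le_vnorm.
Qed.

Lemma opnorm_has_sup A :
  has_sup [set vnorm (A *m v) | v in [set v : 'cV[C]_n | vnorm v <= 1]]%classic.
Proof.
split; first by exists 0, 0; rewrite /= ?mulmx0 vnorm0.
have [K K0 AK] := vnorm_mulmx_bounded A.
by exists K => _ [v /= v1 <-]; rewrite (le_trans (AK v)) // ler_piMr.
Qed.

Lemma opnorm_ub A v : vnorm v <= 1 -> vnorm (A *m v) <= opnorm A.
Proof. by move=> v1; apply: (sup_upper_bound (opnorm_has_sup A)); exists v. Qed.

Lemma opnorm_ge0 A : 0 <= opnorm A.
Proof. by have := @opnorm_ub A 0; rewrite mulmx0 !vnorm0; apply; exact: ler01. Qed.

Lemma vnorm_mulmx_le A v : vnorm (A *m v) <= opnorm A * vnorm v.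
Proof.
have [/vnorm_eq0 ->|vn0] := eqVneq (vnorm v) 0; first by rewrite mulmx0 !vnorm0 mulr0.
have v_gt0 : 0 < vnorm v by rewrite lt0r vn0 vnorm_ge0.
have c_ge0 : 0 <= (vnorm v)^-1 by rewrite invr_ge0 vnorm_ge0.
have := @opnorm_ub A ((vnorm v)^-1%:C%C *: v).
rewrite -scalemxAr !vnormZ normc_real // mulVf // lexx => /(_ isT).
by rewrite -(ler_pM2l v_gt0) mulrA divff // mul1r mulrC.
Qed.

Lemma opnorm_le A k : 0 <= k ->
  (forall v, vnorm (A *m v) <= k * vnorm v) -> opnorm A <= k.
Proof.
move=> k0 Ak; apply: ge_sup; first by case: (opnorm_has_sup A).
move=> _ [v /= v1 <-]; apply: le_trans (Ak v) _.
by rewrite ler_piMr.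
Qed.

Lemma opnormD A B : opnorm (A + B) <= opnorm A + opnorm B.
Proof.
apply: opnorm_le => [|v]; first by rewrite addr_ge0 ?opnorm_ge0.
by rewrite mulmxDl mulrDl (le_trans (vnormD _ _)) // lerD ?vnorm_mulmx_le.
Qed.

Lemma opnormB A B : opnorm (A - B) <= opnorm A + opnorm B.
Proof.
apply: opnorm_le => [|v]; first by rewrite addr_ge0 ?opnorm_ge0.
by rewrite mulmxBl mulrDl (le_trans (vnormB _ _)) // lerD ?vnorm_mulmx_le.
Qed.

End OperatorNorm.

Lemma opnormM {m n p} (A : 'M[C]_(m, n)) (B : 'M[C]_(n, p)) :
  opnorm (A *m B) <= opnorm A * opnorm B.
Proof.
apply: opnorm_le => [|v]; first by rewrite mulr_ge0 ?opnorm_ge0.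
rewrite -mulmxA -mulrA (le_trans (vnorm_mulmx_le _ _)) //.
by rewrite ler_wpM2l ?opnorm_ge0 ?vnorm_mulmx_le.
Qed.

Lemma opnormM_le {m n p} (A : 'M[C]_(m, n)) (B : 'M[C]_(n, p)) a b :
  opnorm A <= a -> opnorm B <= b -> opnorm (A *m B) <= a * b.
Proof.
move=> Aa Bb; apply: le_trans (opnormM A B) _.
by rewrite ler_pM ?opnorm_ge0.
Qed.

Lemma adjmxM {m n p} (A : 'M[C]_(m, n)) (B : 'M[C]_(n, p)) :
  adjmx (A *m B) = adjmx B *m adjmx A.
Proof. by rewrite /adjmx trmx_mul map_mxM. Qed.

Lemma adjmxK {m n} (A : 'M[C]_(m, n)) : adjmx (adjmx A) = A.
Proof. by apply/matrixP => i j; rewrite !mxE conjcK. Qed.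

Lemma adjmxB {m n} (A B : 'M[C]_(m, n)) : adjmx (A - B) = adjmx A - adjmx B.
Proof. by apply/matrixP => i j; rewrite !mxE rmorphB. Qed.

Lemma adjmx1 {n} : adjmx (1%:M : 'M[C]_n) = 1%:M.
Proof. by rewrite /adjmx trmx1 map_mx1. Qed.

Lemma adjmx_tens {m n p q} (A : 'M[C]_(m, n)) (B : 'M[C]_(p, q)) :
  adjmx (A *t B) = adjmx A *t adjmx B.
Proof. by rewrite /adjmx trmx_tens map_mxT. Qed.

Lemma vnorm_adjmx_eq {n k} (u : 'cV[C]_n) (w : 'cV[C]_k) :
  (adjmx u *m u) 0 0 = (adjmx w *m w) 0 0 -> vnorm u = vnorm w.
Proof. by rewrite -!vnorm2_adjmx => /complexI uw; rewrite !vnormE uw. Qed.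

Lemma opnorm_isometry {k n} (U : 'M[C]_(k, n)) :
  adjmx U *m U = 1%:M -> opnorm U <= 1.
Proof.
move=> UtU; apply: opnorm_le => // v; rewrite mul1r le_eqVlt; apply/orP; left.
by apply/eqP/vnorm_adjmx_eq; rewrite adjmxM -mulmxA (mulmxA (adjmx U)) UtU mul1mx.
Qed.

Lemma unitary_opC {n} (U : 'M[C]_n) : unitary_op U -> adjmx U *m U = 1%:M.
Proof. exact: mulmx1C. Qed.

Lemma opnorm_adjmx_unitary {n} (U : 'M[C]_n) :
  unitary_op U -> opnorm (adjmx U) <= 1.
Proof. by move=> UUt; apply: opnorm_isometry; rewrite adjmxK. Qed.

Lemma opnorm_proj {n} (P : 'M[C]_n) : proj_op P -> opnorm P <= 1.
Proof.
move=> [PP Pt]; apply: opnorm_le => // v; rewrite mul1r.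
set a := P *m v; set b := v - P *m v.
have pythagoras : (adjmx v *m v) 0 0 = (adjmx a *m a) 0 0 + (adjmx b *m b) 0 0.
  have -> : adjmx a *m a = adjmx v *m P *m v.
    by rewrite /a adjmxM Pt mulmxA -(mulmxA _ P P) PP.
  rewrite /b adjmxB adjmxM Pt mulmxBl !mulmxBr !mulmxA -(mulmxA _ P P) PP.
  rewrite subrr subr0 !mxE.
  by rewrite [RHS]addrC subrK.
have /complexI : (vnorm2 v)%:C%C = (vnorm2 a + vnorm2 b)%:C%C.
  by rewrite rmorphD /= !vnorm2_adjmx pythagoras.
by rewrite !vnormE ler_sqrt ?vnorm2_ge0 // => ->; rewrite lerDl vnorm2_ge0.
Qed.

Lemma proj_op1 {n} : proj_op (1%:M : 'M[C]_n).
Proof. by rewrite /proj_op mulmx1 adjmx1. Qed.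

Lemma proj_op_tens {m n} (P : 'M[C]_m) (Q : 'M[C]_n) :
  proj_op P -> proj_op Q -> proj_op (P *t Q).
Proof. by move=> [PP Pt] [QQ Qt]; rewrite /proj_op tensmx_mul adjmx_tens PP QQ Pt Qt. Qed.

Lemma proj_op_conj {n} (U P : 'M[C]_n) :
  unitary_op U -> proj_op P -> proj_op (U *m P *m adjmx U).
Proof.
move=> /unitary_opC UtU [PP Pt]; split.
  by rewrite -!mulmxA (mulmxA (adjmx U)) UtU mul1mx (mulmxA P) PP.
by rewrite !adjmxM adjmxK Pt mulmxA.
Qed.

Section TensorSlices.
Context {m : nat}.

Definition tens_slice {k} (j : 'I_m) (v : 'cV[C]_(k * m)) : 'cV[C]_k :=
  \col_i v (mxtens_index (i, j)) 0.

Lemma vnorm2_tens_slice {k} (v : 'cV[C]_(k * m)) :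
  vnorm2 v = \sum_j vnorm2 (tens_slice j v).
Proof.
rewrite /vnorm2 sum_mxtens_index exchange_big /=.
by apply: eq_bigr => j _; apply: eq_bigr => i _; rewrite mxE.
Qed.

Lemma tens_slice_tensmx1 {p q} (A : 'M[C]_(p, q)) (v : 'cV[C]_(q * m)) j :
  tens_slice j ((A *t 1%:M) *m v) = A *m tens_slice j v.
Proof.
apply/matrixP => i k; rewrite ord1 !mxE sum_mxtens_index; apply: eq_bigr => i' _.
rewrite (bigD1 j) //= big1 ?addr0 => [|j' j'j].
  by rewrite tensmxE !mxE eqxx mulr1.
by rewrite tensmxE mxE eq_sym (negbTE j'j) mulr0 mul0r.
Qed.

Lemma opnorm_tensmx1 {p q} (A : 'M[C]_(p, q)) :
  opnorm (A *t (1%:M : 'M[C]_m)) <= opnorm A.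
Proof.
apply: opnorm_le => [|v]; first exact: opnorm_ge0.
rewrite -[leRHS]ger0_norm ?mulr_ge0 ?opnorm_ge0 ?vnorm_ge0 // -sqrtr_sqr.
rewrite vnormE ler_sqrt ?sqr_ge0 // exprMn sqr_vnorm !vnorm2_tens_slice mulr_sumr.
apply: ler_sum => j _; rewrite tens_slice_tensmx1 -!sqr_vnorm -exprMn.
by rewrite lerXn2r ?nnegrE ?mulr_ge0 ?opnorm_ge0 ?vnorm_ge0 ?vnorm_mulmx_le.
Qed.

End TensorSlices.

Lemma opnorm_commutator {n} (X V : 'M[C]_n) :
  opnorm (X *m V - V *m X) <= 2 * opnorm X * opnorm V.
Proof.
apply: le_trans (opnormB _ _) _; rewrite -mulrA mulr_natl mulr2n.
by rewrite lerD ?opnormM // mulrC opnormM.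
Qed.

End Norms.

Lemma tensmxDl (K : comPzRingType) {m n p q} (A B : 'M[K]_(m, n)) (M : 'M[K]_(p, q)) :
  (A + B) *t M = A *t M + B *t M.
Proof. by apply/matrixP => i j; rewrite !mxE mulrDl. Qed.

Lemma compress_conj_sub (K : pzRingType) {n} (U W Q X : 'M[K]_n) :
  U *m W = 1%:M -> W *m U = 1%:M ->
  let P' := U *m Q *m W in
  P' *m X *m P' - U *m (Q *m X *m Q) *m W
    = P' *m (X *m (U - 1%:M) - (U - 1%:M) *m X) *m W *m P'.
Proof.
move=> UW WU P'.
have P'U : P' *m U = U *m Q by rewrite /P' -mulmxA WU mulmx1.
have WP' : W *m P' = Q *m W by rewrite /P' !mulmxA WU mul1mx.
clearbody P'.
have -> : X *m (U - 1%:M) - (U - 1%:M) *m X = X *m U - U *m X.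
  by rewrite mulmxBr mulmxBl mulmx1 mul1mx opprB addrA subrK.
rewrite mulmxBr !mulmxBl; congr (_ - _).
  by rewrite -!mulmxA (mulmxA U W) UW mul1mx.
by rewrite !mulmxA P'U -(mulmxA _ W P') WP' !mulmxA.
Qed.

Lemma gadget_property_of_gadget (R : realType) {d m} (H : 'M[R[i]]_d)
    (H' : 'M[R[i]]_(d * m)) (eta eps : R) :
  is_gadget H H' eta eps -> gadget_property H H' (2 * eta) eps.
Proof.
move=> [P [U [projP P_neq0 unitU U_near1]]] /=.
set Q := (1%:M : 'M[R[i]]_d) *t P; set P' := U *m Q *m adjmx U => err_le.
have projQ : proj_op Q by apply: proj_op_tens projP; exact: proj_op1.
have projP' : proj_op P' by exact: proj_op_conj.
exists P', P; split=> // Helse _; exists U; split=> //.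
set X := Helse *t (1%:M : 'M[R[i]]_m).
have -> : P' *m (H' + X) *m P' - U *m ((H + Helse) *t P) *m adjmx U =
    (P' *m H' *m P' - U *m (H *t P) *m adjmx U) +
    (P' *m X *m P' - U *m (Q *m X *m Q) *m adjmx U).
  have -> : (H + Helse) *t P = H *t P + Q *m X *m Q.
    by rewrite tensmxDl !tensmx_mul mul1mx !mulmx1 projP.1.
  by rewrite mulmxDr !mulmxDl mulmxDr !mulmxDl opprD addrACA.
rewrite compress_conj_sub //; last exact: unitary_opC.
apply: le_trans (opnormD _ _) _; apply: lerD err_le _.
have eta_ge0 : 0 <= eta := le_trans (opnorm_ge0 _) U_near1.
have comm_le : opnorm (X *m (U - 1%:M) - (U - 1%:M) *m X) <= 2 * eta * opnorm Helse.
  apply: le_trans (opnorm_commutator _ _) _.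
  by rewrite mulrAC ler_pM ?mulr_ge0 ?opnorm_ge0 ?ler_pM2l ?opnorm_tensmx1.
rewrite -[leRHS]mul1r -[leRHS]mulr1 -[leRHS]mulr1.
apply: opnormM_le; last exact: opnorm_proj.
apply: opnormM_le; last exact: opnorm_adjmx_unitary.
by apply: opnormM_le comm_le; exact: opnorm_proj.
Qed.

Theorem theorem3p1 (R : realType) :
  exists c : R, 0 < c /\
  forall (n : nat) (dims : 'I_n -> nat) (m : nat)
    (H : 'M[R[i]]_(\prod_(k < n) dims k))
    (H' : 'M[R[i]]_((\prod_(k < n) dims k) * m)) (eta eps : R),
    herm_op H -> herm_op H' ->
    is_gadget H H' eta eps ->
    gadget_property H H' (c * eta) eps.
Proof.
exists 2; split=> // n dims m H H' eta eps _ _.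
exact: gadget_property_of_gadget.
Qed.
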